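(* Let $\kappa>-1$ and $\lambda\in\mathbb{C}$. Let $T_\kappa$ be the operator $T_\kappa f(x)=f'(x)+\kappa\frac{f(x)-f(0)}{x}$ on functions of one real variable. Then the problem $$T_\kappa f(x)=i\lambda f(x),\qquad f(0)=1,$$ has a unique analytic solution, namely $f(x)=M_\kappa(i\lambda x):=M(1,\kappa+1;i\lambda x)$, where $M(a,b;z)=\sum_{n=0}^\infty\frac{(a)_n}{(b)_n}\frac{z^n}{n!}$ is the confluent hypergeometric (Kummer) function.
   Context: $(a)_n=\Gamma(a+n)/\Gamma(a)$ is the Pochhammer symbol. For an analytic $f$, the quotient $(f(x)-f(0))/x$ is understood as its analytic extension at $x=0$. *)

From Stdlib Require Import Reals Factorial.
From Coquelicot Require Import Coquelicot.
Open Scope R_scope.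

Definition real_analytic (f : R -> C) : Prop :=
  forall x0 : R, exists r : R, 0 < r /\ exists a : nat -> C,
    forall x : R, Rabs (x - x0) < r ->
      is_series (fun n => (a n * RtoC ((x - x0) ^ n))%C) (f x).

Definition Cderiv (f : R -> C) (x : R) : C :=
  (Derive (fun t => Re (f t)) x, Derive (fun t => Im (f t)) x).

(* (f(x) - f(0))/x, with its analytic extension f'(0) at x = 0 *)
Definition diff_quot (f : R -> C) (x : R) : C :=
  if Req_EM_T x 0 then Cderiv f 0 else ((f x - f 0) / RtoC x)%C.

Definition T_kappa (kappa : R) (f : R -> C) (x : R) : C :=
  (Cderiv f x + RtoC kappa * diff_quot f x)%C.

Fixpoint poch (a : C) (n : nat) : C :=
  match n with
  | O => 1%C
  | S m => (poch a m * (a + INR m))%C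
  end.

Definition kummer_term (a b z : C) (n : nat) : C :=
  (poch a n / poch b n * Cpow z n / INR (fact n))%C.

From Stdlib Require Import Reals Lra Lia Factorial FunctionalExtensionality.
From Coquelicot Require Import Coquelicot.
Open Scope R_scope.

(* On a power series sum c_n x^n the operator T_kappa acts by sending c_(n+1) x^(n+1) to
   (n + 1 + kappa) c_(n+1) x^n.  Hence an analytic solution of T_kappa f = mu f, f(0) = 1,
   has Taylor coefficients at 0 obeying (n + 1 + kappa) c_(n+1) = mu c_n, c_0 = 1, i.e.
   c_n = mu^n / (kappa + 1)_n: near 0, f is Kummer's M(1, kappa + 1; mu x).  Conversely this
   series is entire, hence real-analytic (Taylor's formula with Lagrange remainder and
   Cauchy-type bounds on the derivatives), and solves the problem.  Away from 0 the difference
   w of two solutions satisfies w' = (mu - kappa / x) w, along which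
   |w|^2 |x|^(2 kappa) exp(-2 Re(mu) x) is constant; so two solutions that agree near 0 agree
   on both half-lines. *)

(** * Complex series and real power series *)

Lemma RtoC_neq_0 x : x <> 0 -> RtoC x <> 0%C.
Proof. intros Hx E; apply Hx, RtoC_inj, E. Qed.

Lemma Re_sum_n (a : nat -> C) n : Re (sum_n a n) = sum_n (fun k => Re (a k)) n.
Proof. induction n; [now rewrite !sum_O | rewrite !sum_Sn; simpl; now rewrite <- IHn]. Qed.

Lemma Im_sum_n (a : nat -> C) n : Im (sum_n a n) = sum_n (fun k => Im (a k)) n.
Proof. induction n; [now rewrite !sum_O | rewrite !sum_Sn; simpl; now rewrite <- IHn]. Qed.

Lemma filterlim_C_iff {T} (F : (T -> Prop) -> Prop) (u : T -> C) (l : C) : Filter F ->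
  filterlim u F (locally l) <->
  filterlim (fun n => Re (u n)) F (locally (Re l)) /\
  filterlim (fun n => Im (u n)) F (locally (Im l)).
Proof.
  intros HF; split.
  - intros H; split; intros P [e He];
      [apply (H (fun y => P (Re y))) | apply (H (fun y => P (Im y)))];
      exists e; intros y [H1 H2]; now apply He.
  - intros [H1 H2] P [e He].
    pose proof (H1 _ (locally_ball (Re l) e)) as E1.
    pose proof (H2 _ (locally_ball (Im l) e)) as E2.
    unfold filtermap in E1, E2 |- *.
    generalize (filter_and _ _ E1 E2); apply filter_imp; intros n [A B]; now apply He.
Qed.

Lemma is_series_C (a : nat -> C) (l : C) :
  is_series a l <->
  is_series (fun n => Re (a n)) (Re l) /\ is_series (fun n => Im (a n)) (Im l).
Proof.
  unfold is_series; rewrite filterlim_C_iff by apply eventually_filter.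
  split; intros [H1 H2]; split;
    (eapply filterlim_ext; [|eassumption]; intros n; cbv beta;
     rewrite ?Re_sum_n, ?Im_sum_n; reflexivity).
Qed.

Lemma locally_Rabs_lt r x : Rabs x < r -> locally x (fun t => Rabs t < r).
Proof.
  intros H; assert (He : 0 < r - Rabs x) by lra.
  exists (mkposreal _ He); intros t Ht; simpl in Ht.
  unfold ball in Ht; simpl in Ht; unfold AbsRing_ball, abs, minus, plus, opp in Ht; simpl in Ht.
  pose proof (Rabs_triang_inv t x); replace (t + - x) with (t - x) in Ht by ring; lra.
Qed.

Lemma CV_radius_ge_of_ex_pseries (a : nat -> R) x :
  ex_pseries a x -> Rbar_le (Rabs x) (CV_radius a).
Proof.
  intros [l Hl].
  assert (Hlim : is_lim_seq (fun n => a n * x ^ n) 0).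
  { apply ex_series_lim_0; exists l; now apply is_pseries_R. }
  destruct (filterlim_bounded (V := R_NormedModule) _ (ex_intro _ 0 Hlim)) as [M HM].
  apply (proj1 (CV_radius_bounded a)); exists M; intros n.
  rewrite RPow_abs, Rabs_mult, Rabs_Rabsolu, <- Rabs_mult; apply HM.
Qed.

Lemma CV_radius_gt_of_disk (a : nat -> R) r :
  (forall y, Rabs y < r -> ex_pseries a y) ->
  forall x, Rabs x < r -> Rbar_lt (Rabs x) (CV_radius a).
Proof.
  intros H x Hx.
  set (y := (Rabs x + r) / 2).
  assert (Hy : Rabs x < Rabs y < r).
  { unfold y; pose proof (Rabs_pos x); rewrite (Rabs_pos_eq ((Rabs x + r) / 2)); lra. }
  eapply Rbar_lt_le_trans; [| exact (CV_radius_ge_of_ex_pseries a y (H y (proj2 Hy)))].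
  simpl; lra.
Qed.

Lemma CV_radius_scal_ge (c : R) (a : nat -> R) :
  Rbar_le (CV_radius a) (CV_radius (fun n => c * a n)).
Proof.
  destruct (Req_dec c 0) as [-> | Hc].
  - rewrite (CV_radius_ext (fun n => 0 * a n) (fun _ => 0)), CV_radius_const_0
      by (intros; ring).
    now destruct (CV_radius a).
  - rewrite <- (CV_radius_scal c a Hc); apply Rbar_le_refl.
Qed.

Lemma CV_radius_lin (a b : nat -> R) (al be x : R) :
  Rbar_lt (Rabs x) (CV_radius a) -> Rbar_lt (Rabs x) (CV_radius b) ->
  Rbar_lt (Rabs x) (CV_radius (fun n => al * a n + be * b n)).
Proof.
  intros Ha Hb.
  eapply Rbar_lt_le_trans; [| apply (CV_radius_plus (fun n => al * a n) (fun n => be * b n))].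
  apply Rbar_min_case;
    [apply (Rbar_lt_le_trans _ _ _ Ha) | apply (Rbar_lt_le_trans _ _ _ Hb)];
    apply CV_radius_scal_ge.
Qed.

Lemma PSeries_lin (a b : nat -> R) (al be x : R) :
  ex_pseries a x -> ex_pseries b x ->
  PSeries (fun n => al * a n + be * b n) x = al * PSeries a x + be * PSeries b x.
Proof.
  intros Ha Hb; rewrite <- !PSeries_scal, <- PSeries_plus; [reflexivity | |];
    apply (ex_pseries_scal (V := R_NormedModule)); auto using Rmult_comm.
Qed.

Lemma ex_series_ratio_half (u : nat -> R) N :
  (forall n, 0 <= u n) -> (forall n, (N <= n)%nat -> u (S n) <= u n / 2) -> ex_series u.
Proof.
  intros Hpos Hratio.
  apply (ex_series_incr_n u N).
  apply (ex_series_le (V := R_CompleteNormedModule) _ (fun k => u N * (/ 2) ^ k)).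
  - intros k; change (norm (u (N + k)%nat)) with (Rabs (u (N + k)%nat)).
    rewrite Rabs_pos_eq by apply Hpos.
    induction k as [| k IH]; simpl.
    + rewrite Nat.add_0_r; lra.
    + replace (N + S k)%nat with (S (N + k)) by lia.
      pose proof (Hratio (N + k)%nat ltac:(lia)); lra.
  - apply (ex_series_scal_l (V := R_NormedModule)), ex_series_geom.
    rewrite Rabs_pos_eq; lra.
Qed.

(** * Entire power series are real-analytic *)

Lemma INR_fact_neq_0 n : INR (fact n) <> 0.
Proof. apply not_0_INR, fact_neq_0. Qed.

Lemma sum_f_R0_ge_term (f : nat -> R) n i :
  (forall k, 0 <= f k) -> (i <= n)%nat -> f i <= sum_f_R0 f n.
Proof.
  intros Hf; induction n as [| n IH]; intros Hi; simpl.
  - replace i with 0%nat by lia; lra.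
  - destruct (Nat.eq_dec i (S n)) as [-> | Hne].
    + pose proof (cond_pos_sum f n Hf); lra.
    + pose proof (IH ltac:(lia)); pose proof (Hf (S n)); lra.
Qed.

(* One term of the binomial expansion of (R + h)^(m + n). *)
Lemma binomial_term_le n m h R : 0 <= h -> 0 <= R ->
  h ^ m / INR (fact m) * (INR (fact (m + n)) / INR (fact n)) * R ^ n <= (R + h) ^ (m + n).
Proof.
  intros Hh HR; rewrite Rplus_comm, binomial.
  eapply Rle_trans; [| apply (sum_f_R0_ge_term _ (m + n) m)].
  - unfold Binomial.C; replace (m + n - m)%nat with n by lia.
    right; field; split; apply INR_fact_neq_0.
  - intros i; unfold Binomial.C.
    pose proof (pos_INR (fact (m + n))).
    pose proof (lt_0_INR _ (lt_O_fact i)); pose proof (lt_0_INR _ (lt_O_fact (m + n - i))).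
    apply Rmult_le_pos; [apply Rmult_le_pos |]; try apply pow_le; auto.
    apply Rmult_le_pos; [lra |]; apply Rlt_le, Rinv_0_lt_compat, Rmult_lt_0_compat; lra.
  - lia.
Qed.

Lemma Rabs_PSeries_le (b : nat -> R) z R :
  Rabs z <= R -> ex_series (fun n => Rabs (b n) * R ^ n) ->
  Rabs (PSeries b z) <= Series (fun n => Rabs (b n) * R ^ n).
Proof.
  intros Hz Hex.
  assert (Hle : forall n, 0 <= Rabs (b n * z ^ n) <= Rabs (b n) * R ^ n).
  { intros n; split; [apply Rabs_pos |].
    rewrite Rabs_mult, <- RPow_abs; apply Rmult_le_compat_l; [apply Rabs_pos |].
    apply pow_incr; split; [apply Rabs_pos | exact Hz]. }
  eapply Rle_trans; [apply Series_Rabs | apply Series_le; auto].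
  apply (ex_series_le (V := R_CompleteNormedModule) _ _) with (2 := Hex).
  intros n; change (norm (Rabs (b n * z ^ n))) with (Rabs (Rabs (b n * z ^ n))).
  rewrite Rabs_Rabsolu; apply Hle.
Qed.

Lemma Series_tail_lim (w : nat -> R) :
  ex_series w -> is_lim_seq (fun m => Series (fun n => w (S m + n)%nat)) 0.
Proof.
  intros Hw.
  apply (is_lim_seq_ext (fun m => Series w - sum_f_R0 w m)).
  { intros m; rewrite (Series_incr_n w (S m)) by (lia || auto); simpl; ring. }
  replace (Finite 0) with (Finite (Series w - Series w)) by (f_equal; ring).
  apply is_lim_seq_minus'; [apply is_lim_seq_const |].
  apply (is_lim_seq_ext (sum_n w)); [intros; apply sum_n_Reals | apply Series_correct, Hw].
Qed.

Section EntireTaylor.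

Variable a : nat -> R.
Hypothesis Hent : forall x, Rbar_lt (Rabs x) (CV_radius a).

Lemma ex_series_abs_coef_pow R' : 0 <= R' -> ex_series (fun n => Rabs (a n) * R' ^ n).
Proof.
  intros HR; apply (ex_series_ext (fun n => Rabs (a n * R' ^ n))), CV_disk_inside, Hent.
  intros n; rewrite Rabs_mult, (Rabs_pos_eq (R' ^ n)) by (apply pow_le, HR); reflexivity.
Qed.

Lemma taylor_term_le m z h R' : 0 <= h -> Rabs z <= R' ->
  Rabs (h ^ m / INR (fact m) * Derive_n (PSeries a) m z)
  <= Series (fun n => Rabs (a (m + n)%nat) * (R' + h) ^ (m + n)).
Proof.
  intros Hh Hz.
  assert (HR : 0 <= R') by (pose proof (Rabs_pos z); lra).
  assert (Hf : forall j, 0 < INR (fact j)) by (intros; apply lt_0_INR, lt_O_fact).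
  assert (Hc : 0 <= h ^ m / INR (fact m)).
  { apply Rmult_le_pos; [apply pow_le, Hh | apply Rlt_le, Rinv_0_lt_compat, Hf]. }
  rewrite Derive_n_PSeries, Rabs_mult, (Rabs_pos_eq _ Hc) by apply Hent.
  eapply Rle_trans.
  { apply Rmult_le_compat_l; [exact Hc |]; apply Rabs_PSeries_le; [exact Hz |].
    apply (ex_series_ext (fun n => Rabs (PS_derive_n m a n * R' ^ n))).
    - intros n; rewrite Rabs_mult, (Rabs_pos_eq (R' ^ n)) by (apply pow_le, HR); reflexivity.
    - apply CV_disk_inside; rewrite CV_radius_derive_n; apply Hent. }
  rewrite <- Series_scal_l; apply Series_le.
  - intros n; unfold PS_derive_n.
    replace (n + m)%nat with (m + n)%nat by lia.
    pose proof (Rabs_pos (a (m + n)%nat)).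
    assert (0 <= INR (fact (m + n)) / INR (fact n)).
    { apply Rmult_le_pos; [apply pos_INR | apply Rlt_le, Rinv_0_lt_compat, Hf]. }
    rewrite Rabs_mult, (Rabs_pos_eq (_ / _)) by assumption.
    split.
    { apply Rmult_le_pos; [exact Hc |].
      apply Rmult_le_pos; [apply Rmult_le_pos; assumption | apply pow_le, HR]. }
    pose proof (binomial_term_le n m h R' Hh HR).
    replace (h ^ m / INR (fact m)
             * (INR (fact (m + n)) / INR (fact n) * Rabs (a (m + n)%nat) * R' ^ n))
      with (Rabs (a (m + n)%nat)
             * (h ^ m / INR (fact m) * (INR (fact (m + n)) / INR (fact n)) * R' ^ n))
      by ring.
    apply Rmult_le_compat_l; assumption.
  - apply (ex_series_incr_n (fun j => Rabs (a j) * (R' + h) ^ j) m).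
    apply ex_series_abs_coef_pow; lra.
Qed.

Lemma PSeries_taylor_pos x0 h : 0 < h ->
  is_series (fun m => h ^ m / INR (fact m) * Derive_n (PSeries a) m x0) (PSeries a (x0 + h)).
Proof.
  intros Hh.
  set (T := fun m => Series (fun n => Rabs (a (S m + n)%nat) * (Rabs x0 + h + h) ^ (S m + n))).
  set (L := PSeries a (x0 + h)).
  assert (HT : is_lim_seq T 0).
  { apply (Series_tail_lim (fun j => Rabs (a j) * (Rabs x0 + h + h) ^ j)).
    apply ex_series_abs_coef_pow; pose proof (Rabs_pos x0); lra. }
  assert (Hrem : forall n, Rabs (L - sum_f_R0
            (fun m => h ^ m / INR (fact m) * Derive_n (PSeries a) m x0) n) <= T n).
  { intros n.
    destruct (Taylor_Lagrange (PSeries a) n x0 (x0 + h)) as [z [Hz E]]; [lra | |].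
    { intros t _ k _; apply ex_derive_n_PSeries, Hent. }
    replace (x0 + h - x0) with h in E by ring; unfold L; rewrite E.
    match goal with |- Rabs (?A + ?B - ?A) <= _ => replace (A + B - A) with B by ring end.
    apply taylor_term_le; [lra |].
    replace z with (x0 + (z - x0)) by ring.
    eapply Rle_trans; [apply Rabs_triang |]; rewrite (Rabs_pos_eq (z - x0)); lra. }
  change (is_lim_seq (sum_n (fun m => h ^ m / INR (fact m) * Derive_n (PSeries a) m x0)) L).
  apply (is_lim_seq_le_le (fun n => L - T n) _ (fun n => L + T n)).
  - intros n; rewrite sum_n_Reals; specialize (Hrem n); apply Rabs_le_between' in Hrem; lra.
  - replace (Finite L) with (Finite (L - 0)) by (f_equal; ring).
    apply is_lim_seq_minus'; [apply is_lim_seq_const | exact HT].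
  - replace (Finite L) with (Finite (L + 0)) by (f_equal; ring).
    apply is_lim_seq_plus'; [apply is_lim_seq_const | exact HT].
Qed.

End EntireTaylor.

Lemma PSeries_taylor_0 (a : nat -> R) x0 :
  is_series (fun m => 0 ^ m / INR (fact m) * Derive_n (PSeries a) m x0) (PSeries a (x0 + 0)).
Proof.
  rewrite Rplus_0_r.
  apply (filterlim_ext (fun _ => PSeries a x0)); [| apply filterlim_const].
  intros n; induction n as [| n IH].
  - rewrite sum_O; simpl; field.
  - rewrite sum_Sn, <- IH; simpl; unfold plus; simpl; unfold Rdiv; ring.
Qed.

Lemma PSeries_alt_sign (a : nat -> R) t :
  PSeries (fun n => (-1) ^ n * a n) t = PSeries a (- t).
Proof.
  apply Series_ext; intros n.
  replace (- t) with (-1 * t) by ring; rewrite Rpow_mult_distr; ring.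
Qed.

Lemma PSeries_taylor_neg (a : nat -> R) (Hent : forall x, Rbar_lt (Rabs x) (CV_radius a)) x0 h :
  h < 0 ->
  is_series (fun m => h ^ m / INR (fact m) * Derive_n (PSeries a) m x0) (PSeries a (x0 + h)).
Proof.
  intros Hneg.
  set (a' := fun n => (-1) ^ n * a n).
  assert (Hent' : forall x, Rbar_lt (Rabs x) (CV_radius a')).
  { intros x; apply (CV_radius_gt_of_disk a' (Rabs x + 1)); [| lra].
    intros y _; apply CV_disk_correct; unfold CV_disk.
    apply (ex_series_ext (fun n => Rabs (a n * y ^ n))); [| apply CV_disk_inside, Hent].
    intros n; unfold a'; rewrite !Rabs_mult, pow_1_abs, Rmult_1_l; reflexivity. }
  assert (HD : forall m, Derive_n (PSeries a') m (- x0) = (-1) ^ m * Derive_n (PSeries a) m x0).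
  { intros m; rewrite (Derive_n_ext _ (fun t => PSeries a (- t))) by apply PSeries_alt_sign.
    apply is_derive_n_unique, is_derive_n_comp_opp.
    - apply filter_forall; intros y k _; apply ex_derive_n_PSeries, Hent.
    - rewrite Ropp_involutive; apply Derive_n_correct, ex_derive_n_PSeries, Hent. }
  pose proof (PSeries_taylor_pos a' Hent' (- x0) (- h) ltac:(lra)) as H.
  unfold a' in H; rewrite PSeries_alt_sign in H; replace (- (- x0 + - h)) with (x0 + h) in H by ring.
  assert (Hterm : forall m, (- h) ^ m / INR (fact m) * Derive_n (PSeries a') m (- x0)
                          = h ^ m / INR (fact m) * Derive_n (PSeries a) m x0).
  { intros m; rewrite HD.
    assert (Hsq : (-1) ^ m * (-1) ^ m = 1).
    { rewrite <- Rpow_mult_distr; replace (-1 * -1) with 1 by ring; apply pow1. }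
    replace (- h) with (-1 * h) by ring; rewrite Rpow_mult_distr.
    set (D := Derive_n (PSeries a) m x0).
    replace (h ^ m / INR (fact m) * D) with ((-1) ^ m * (-1) ^ m * (h ^ m / INR (fact m) * D))
      by (rewrite Hsq; ring).
    unfold Rdiv; ring. }
  revert H; apply is_series_ext; exact Hterm.
Qed.

Lemma PSeries_taylor (a : nat -> R) (Hent : forall x, Rbar_lt (Rabs x) (CV_radius a)) x0 h :
  is_series (fun m => h ^ m / INR (fact m) * Derive_n (PSeries a) m x0) (PSeries a (x0 + h)).
Proof.
  destruct (Rtotal_order h 0) as [Hneg | [-> | Hpos]];
    [apply PSeries_taylor_neg | apply PSeries_taylor_0 | apply PSeries_taylor_pos]; auto.
Qed.

(** * Power series with complex coefficients and the operator T_kappa *)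

Definition PSeriesC (c : nat -> C) (x : R) : C :=
  (PSeries (fun n => Re (c n)) x, PSeries (fun n => Im (c n)) x).

Definition in_CV_disk_C (c : nat -> C) (x : R) : Prop :=
  Rbar_lt (Rabs x) (CV_radius (fun n => Re (c n))) /\
  Rbar_lt (Rabs x) (CV_radius (fun n => Im (c n))).

Lemma PSeriesC_ext (c d : nat -> C) x : (forall n, c n = d n) -> PSeriesC c x = PSeriesC d x.
Proof. intros E; unfold PSeriesC; f_equal; apply PSeries_ext; intros n; now rewrite E. Qed.

Lemma is_series_PSeriesC (c : nat -> C) x :
  in_CV_disk_C c x -> is_series (fun n => (c n * RtoC (x ^ n))%C) (PSeriesC c x).
Proof.
  intros [Hre Him]; apply is_series_C; split;
    [ apply (is_series_ext (fun n => Re (c n) * x ^ n)); [intros; symmetry; apply re_scal_r |]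
    | apply (is_series_ext (fun n => Im (c n) * x ^ n)); [intros; symmetry; apply im_scal_r |] ];
    apply is_pseries_R, PSeries_correct, CV_radius_inside; assumption.
Qed.

Lemma PSeriesC_0 (c : nat -> C) : PSeriesC c 0 = c 0%nat.
Proof. unfold PSeriesC; rewrite !PSeries_0; now destruct (c 0%nat). Qed.

Lemma PSeriesC_ext_recip (c d : nat -> C) n :
  in_CV_disk_C c 0 -> in_CV_disk_C d 0 ->
  locally 0 (fun x => PSeriesC c x = PSeriesC d x) -> c n = d n.
Proof.
  unfold in_CV_disk_C; rewrite Rabs_R0; intros [Hc1 Hc2] [Hd1 Hd2] Heq.
  apply injective_projections;
    [ apply (PSeries_ext_recip (fun n => Re (c n)) (fun n => Re (d n)))
    | apply (PSeries_ext_recip (fun n => Im (c n)) (fun n => Im (d n))) ]; auto;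
    revert Heq; apply filter_imp; intros x E; [exact (f_equal fst E) | exact (f_equal snd E)].
Qed.

Lemma in_CV_disk_C_scal (mu : C) (c : nat -> C) x :
  in_CV_disk_C c x -> in_CV_disk_C (fun n => (mu * c n)%C) x.
Proof.
  intros [Hre Him]; split.
  - rewrite (CV_radius_ext _ (fun n => Re mu * Re (c n) + - Im mu * Im (c n)))
      by (intros; rewrite re_mult; ring).
    now apply CV_radius_lin.
  - rewrite (CV_radius_ext _ (fun n => Re mu * Im (c n) + Im mu * Re (c n)))
      by (intros; rewrite im_mult; ring).
    now apply CV_radius_lin.
Qed.

Lemma PSeriesC_scal (mu : C) (c : nat -> C) x :
  in_CV_disk_C c x -> PSeriesC (fun n => (mu * c n)%C) x = (mu * PSeriesC c x)%C.
Proof.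
  intros [Hre Him]; apply CV_radius_inside in Hre, Him.
  unfold PSeriesC; apply injective_projections; simpl.
  - rewrite (PSeries_ext _ (fun n => Re mu * Re (c n) + - Im mu * Im (c n))) by (intros; unfold Re, Im; ring).
    rewrite PSeries_lin by assumption; unfold Re, Im; ring.
  - rewrite (PSeries_ext _ (fun n => Re mu * Im (c n) + Im mu * Re (c n))) by (intros; unfold Re, Im; ring).
    rewrite PSeries_lin by assumption; unfold Re, Im; ring.
Qed.

Lemma real_analytic_PSeriesC (c : nat -> C) :
  (forall x, in_CV_disk_C c x) -> real_analytic (PSeriesC c).
Proof.
  intros Hc x0; exists 1; split; [lra |].
  set (coef := fun (a : nat -> R) m => Derive_n (PSeries a) m x0 / INR (fact m)).
  assert (Htaylor : forall a, (forall x, Rbar_lt (Rabs x) (CV_radius a)) -> forall x,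
            is_series (fun m => coef a m * (x - x0) ^ m) (PSeries a x)).
  { intros a Ha x; pose proof (PSeries_taylor a Ha x0 (x - x0)) as H.
    rewrite Rplus_minus in H; revert H; apply is_series_ext; intros m.
    unfold coef; simpl; field; apply INR_fact_neq_0. }
  exists (fun m => (coef (fun n => Re (c n)) m, coef (fun n => Im (c n)) m)).
  intros x _; apply is_series_C; split;
    [ apply (is_series_ext (fun m => coef (fun n => Re (c n)) m * (x - x0) ^ m));
        [intros; rewrite re_scal_r; reflexivity | apply Htaylor; intros; apply Hc]
    | apply (is_series_ext (fun m => coef (fun n => Im (c n)) m * (x - x0) ^ m));
        [intros; rewrite im_scal_r; reflexivity | apply Htaylor; intros; apply Hc] ].
Qed.

(* Coefficients of T_kappa applied to a power series: x^(n+1) maps to (n + 1 + kappa) x^n. *)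
Definition dunkl_coef (k : R) (c : nat -> C) (n : nat) : C :=
  (RtoC (INR (S n) + k) * c (S n))%C.

Lemma CV_radius_dunkl (k : R) (a : nat -> R) :
  forall x, Rbar_lt (Rabs x) (CV_radius a) ->
  Rbar_lt (Rabs x) (CV_radius (fun n => (INR (S n) + k) * a (S n))).
Proof.
  intros x Hx.
  rewrite (CV_radius_ext _ (fun n => 1 * PS_derive a n + k * PS_decr_1 a n))
    by (intros; unfold PS_derive, PS_decr_1; ring).
  apply CV_radius_lin; [rewrite CV_radius_derive | rewrite CV_radius_decr_1]; exact Hx.
Qed.

Lemma in_CV_disk_C_dunkl (k : R) (c : nat -> C) x :
  in_CV_disk_C c x -> in_CV_disk_C (dunkl_coef k c) x.
Proof.
  intros [Hre Him]; unfold dunkl_coef; split;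
    [ rewrite (CV_radius_ext _ (fun n => (INR (S n) + k) * Re (c (S n)))) by (intros; apply re_scal_l)
    | rewrite (CV_radius_ext _ (fun n => (INR (S n) + k) * Im (c (S n)))) by (intros; apply im_scal_l) ];
    [ apply (CV_radius_dunkl k (fun n => Re (c n))) | apply (CV_radius_dunkl k (fun n => Im (c n))) ];
    assumption.
Qed.

Definition T_kappa_R (k : R) (F : R -> R) (x : R) : R :=
  Derive F x + k * (if Req_EM_T x 0 then Derive F 0 else (F x - F 0) / x).

Lemma Re_T_kappa (k : R) (f : R -> C) x :
  Re (T_kappa k f x) = T_kappa_R k (fun t => Re (f t)) x.
Proof.
  unfold T_kappa, T_kappa_R, diff_quot, Cderiv.
  destruct (Req_EM_T x 0); [simpl; ring |].
  destruct (f x), (f 0); unfold Cdiv, Cinv; simpl; field; auto.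
Qed.

Lemma Im_T_kappa (k : R) (f : R -> C) x :
  Im (T_kappa k f x) = T_kappa_R k (fun t => Im (f t)) x.
Proof.
  unfold T_kappa, T_kappa_R, diff_quot, Cderiv.
  destruct (Req_EM_T x 0); [simpl; ring |].
  destruct (f x), (f 0); unfold Cdiv, Cinv; simpl; field; auto.
Qed.

Lemma T_kappa_R_neq_0 k F x : x <> 0 -> T_kappa_R k F x = Derive F x + k * ((F x - F 0) / x).
Proof. intros Hx; unfold T_kappa_R; now destruct (Req_EM_T x 0). Qed.

Lemma T_kappa_R_PSeries (a : nat -> R) (F : R -> R) r k x :
  (forall t, Rabs t < r -> F t = PSeries a t) ->
  (forall t, Rabs t < r -> Rbar_lt (Rabs t) (CV_radius a)) ->
  Rabs x < r ->
  T_kappa_R k F x = PSeries (fun n => (INR (S n) + k) * a (S n)) x.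
Proof.
  intros HF Hrad Hx.
  assert (H0 : Rabs 0 < r) by (rewrite Rabs_R0; pose proof (Rabs_pos x); lra).
  assert (HD : forall y, Rabs y < r -> Derive F y = PSeries (PS_derive a) y).
  { intros y Hy; rewrite <- Derive_PSeries by auto; apply Derive_ext_loc.
    generalize (locally_Rabs_lt r y Hy); apply filter_imp; auto. }
  assert (Ex1 : ex_pseries (PS_derive a) x)
    by (apply CV_radius_inside; rewrite CV_radius_derive; auto).
  assert (Ex2 : ex_pseries (PS_decr_1 a) x)
    by (apply CV_radius_inside; rewrite CV_radius_decr_1; auto).
  (* The difference quotient is the power series with the constant term removed. *)
  assert (Hquot : (if Req_EM_T x 0 then Derive F 0 else (F x - F 0) / x)
                  = PSeries (PS_decr_1 a) x).
  { destruct (Req_EM_T x 0) as [-> | Hne].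
    - rewrite HD, !PSeries_0 by auto; unfold PS_derive, PS_decr_1; simpl; ring.
    - rewrite !HF, PSeries_0, (PSeries_decr_1 a x) by (auto; apply CV_radius_inside; auto).
      field; auto. }
  unfold T_kappa_R; rewrite Hquot, HD by auto.
  rewrite (PSeries_ext (fun n => (INR (S n) + k) * a (S n))
                       (fun n => 1 * PS_derive a n + k * PS_decr_1 a n))
    by (intros; unfold PS_derive, PS_decr_1; ring).
  rewrite PSeries_lin by auto; ring.
Qed.

Lemma T_kappa_PSeriesC (k : R) (f : R -> C) (c : nat -> C) r x :
  (forall t, Rabs t < r -> f t = PSeriesC c t /\ in_CV_disk_C c t) -> Rabs x < r ->
  T_kappa k f x = PSeriesC (dunkl_coef k c) x.
Proof.
  intros Hf Hx; unfold PSeriesC, dunkl_coef.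
  apply injective_projections; cbn [fst snd]; [rewrite Re_T_kappa | rewrite Im_T_kappa].
  - rewrite (PSeries_ext (fun n => Re (RtoC (INR (S n) + k) * c (S n)))
                         (fun n => (INR (S n) + k) * Re (c (S n)))) by (intros; apply re_scal_l).
    apply (T_kappa_R_PSeries (fun n => Re (c n)) _ r); auto; intros t Ht;
      [exact (f_equal fst (proj1 (Hf t Ht))) | apply (Hf t Ht)].
  - rewrite (PSeries_ext (fun n => Im (RtoC (INR (S n) + k) * c (S n)))
                         (fun n => (INR (S n) + k) * Im (c (S n)))) by (intros; apply im_scal_l).
    apply (T_kappa_R_PSeries (fun n => Im (c n)) _ r); auto; intros t Ht;
      [exact (f_equal snd (proj1 (Hf t Ht))) | apply (Hf t Ht)].
Qed.

(** * The Kummer function M(1, b; mu x) *)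

Lemma poch_1 n : poch 1 n = RtoC (INR (fact n)).
Proof.
  induction n as [| n IH]; [reflexivity |]; simpl poch.
  rewrite IH, fact_simpl, mult_INR, S_INR, RtoC_mult, RtoC_plus; ring.
Qed.

Lemma poch_RtoC_neq_0 b n : 0 < b -> poch (RtoC b) n <> 0%C.
Proof.
  intros Hb; induction n as [| n IH]; simpl; [apply RtoC_neq_0, R1_neq_R0 |].
  apply Cmult_neq_0; [exact IH |]; rewrite <- RtoC_plus; apply RtoC_neq_0.
  pose proof (pos_INR n); lra.
Qed.

Definition kummer_coef (b : R) (mu : C) (n : nat) : C := (mu ^ n / poch (RtoC b) n)%C.

Lemma kummer_term_1 b mu x n : 0 < b ->
  kummer_term 1 (RtoC b) (mu * RtoC x) n = (kummer_coef b mu n * RtoC (x ^ n))%C.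
Proof.
  intros Hb; unfold kummer_term, kummer_coef.
  rewrite poch_1, Cpow_mult_l, RtoC_pow.
  pose proof (poch_RtoC_neq_0 b n Hb).
  pose proof (RtoC_neq_0 _ (INR_fact_neq_0 n)).
  field; auto.
Qed.

Lemma kummer_coef_0 b mu : kummer_coef b mu 0 = 1%C.
Proof. unfold kummer_coef; simpl; field. Qed.

Lemma kummer_coef_S b mu n : 0 < b ->
  (RtoC (b + INR n) * kummer_coef b mu (S n) = mu * kummer_coef b mu n)%C.
Proof.
  intros Hb; unfold kummer_coef; simpl.
  pose proof (poch_RtoC_neq_0 b n Hb).
  assert (RtoC (b + INR n) <> 0%C) by (apply RtoC_neq_0; pose proof (pos_INR n); lra).
  rewrite <- RtoC_plus; field; auto.
Qed.

Lemma ex_series_kummer_coef b mu r : 0 < b ->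
  ex_series (fun n => Cmod (kummer_coef b mu n) * Rabs r ^ n).
Proof.
  intros Hb.
  set (A := Cmod mu * Rabs r).
  assert (HA : 0 <= A) by (apply Rmult_le_pos; [apply Cmod_ge_0 | apply Rabs_pos]).
  destruct (INR_unbounded (2 * A)) as [N HN].
  apply (ex_series_ratio_half _ N).
  - intros n; apply Rmult_le_pos; [apply Cmod_ge_0 | apply pow_le, Rabs_pos].
  - intros n Hn.
    assert (Hd : 0 < b + INR n) by (pose proof (pos_INR n); lra).
    assert (HnN : 2 * A < b + INR n) by (pose proof (le_INR _ _ Hn); lra).
    assert (Hmod : Cmod (kummer_coef b mu (S n)) = Cmod (kummer_coef b mu n) * Cmod mu / (b + INR n)).
    { pose proof (f_equal Cmod (kummer_coef_S b mu n Hb)) as E.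
      rewrite !Cmod_mult, Cmod_R, Rabs_pos_eq in E by lra.
      apply (Rmult_eq_reg_l (b + INR n)); [rewrite E; field |]; lra. }
    pose proof (Cmod_ge_0 (kummer_coef b mu n)).
    pose proof (pow_le (Rabs r) n (Rabs_pos r)).
    rewrite Hmod; simpl.
    replace (Cmod (kummer_coef b mu n) * Cmod mu / (b + INR n) * (Rabs r * Rabs r ^ n))
      with (Cmod (kummer_coef b mu n) * Rabs r ^ n * (A / (b + INR n))) by (unfold A; field; lra).
    assert (A / (b + INR n) <= / 2)
      by (apply (Rmult_le_reg_r (b + INR n)); [lra |]; unfold Rdiv; rewrite Rmult_assoc, Rinv_l; lra).
    unfold Rdiv at 2; apply Rmult_le_compat_l; [apply Rmult_le_pos |]; assumption.
Qed.

Lemma in_CV_disk_kummer_coef b mu x : 0 < b -> in_CV_disk_C (kummer_coef b mu) x.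
Proof.
  intros Hb.
  assert (Hdom : forall (a : nat -> R), (forall n, Rabs (a n) <= Cmod (kummer_coef b mu n)) ->
            Rbar_lt (Rabs x) (CV_radius a)).
  { intros a Ha; apply (CV_radius_gt_of_disk a (Rabs x + 1)); [| lra].
    intros y _; apply CV_disk_correct.
    apply (ex_series_le (V := R_CompleteNormedModule) _ _) with (2 := ex_series_kummer_coef b mu y Hb).
    intros n; change (norm (Rabs (a n * y ^ n))) with (Rabs (Rabs (a n * y ^ n))).
    rewrite Rabs_Rabsolu, Rabs_mult, <- RPow_abs.
    apply Rmult_le_compat_r; [apply pow_le, Rabs_pos | apply Ha]. }
  split; apply Hdom; intros n; (eapply Rle_trans; [| apply Rmax_Cmod]); [apply Rmax_l | apply Rmax_r].
Qed.

(* [kummer_M1 b mu x] is M(1, b; mu x). *)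
Definition kummer_M1 (b : R) (mu : C) : R -> C := PSeriesC (kummer_coef b mu).

Lemma is_series_kummer_M1 b mu x : 0 < b ->
  is_series (kummer_term 1 (RtoC b) (mu * RtoC x)) (kummer_M1 b mu x).
Proof.
  intros Hb; apply (is_series_ext (fun n => (kummer_coef b mu n * RtoC (x ^ n))%C)).
  - intros n; symmetry; now apply kummer_term_1.
  - now apply is_series_PSeriesC, in_CV_disk_kummer_coef.
Qed.

Lemma kummer_M1_0 b mu : kummer_M1 b mu 0 = 1%C.
Proof. unfold kummer_M1; now rewrite PSeriesC_0, kummer_coef_0. Qed.

Lemma real_analytic_kummer_M1 b mu : 0 < b -> real_analytic (kummer_M1 b mu).
Proof. intros Hb; apply real_analytic_PSeriesC; intros x; now apply in_CV_disk_kummer_coef. Qed.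

Lemma dunkl_coef_kummer_coef k mu n : -1 < k ->
  dunkl_coef k (kummer_coef (k + 1) mu) n = (mu * kummer_coef (k + 1) mu n)%C.
Proof.
  intros Hk; unfold dunkl_coef; rewrite <- kummer_coef_S by lra.
  f_equal; f_equal; rewrite S_INR; ring.
Qed.

Lemma T_kappa_kummer_M1 k mu x : -1 < k ->
  T_kappa k (kummer_M1 (k + 1) mu) x = (mu * kummer_M1 (k + 1) mu x)%C.
Proof.
  intros Hk.
  assert (Hdisk : forall t, in_CV_disk_C (kummer_coef (k + 1) mu) t)
    by (intros; apply in_CV_disk_kummer_coef; lra).
  rewrite (T_kappa_PSeriesC _ _ (kummer_coef (k + 1) mu) (Rabs x + 1)) by (auto || lra).
  unfold kummer_M1; rewrite <- PSeriesC_scal by apply Hdisk.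
  apply PSeriesC_ext; intros n; now apply dunkl_coef_kummer_coef.
Qed.

(** * Uniqueness *)

Lemma real_analytic_local_PSeriesC (f : R -> C) x0 : real_analytic f ->
  exists r, 0 < r /\ exists c : nat -> C,
    forall s, Rabs s < r -> f (x0 + s) = PSeriesC c s /\ in_CV_disk_C c s.
Proof.
  intros Han; destruct (Han x0) as [r [Hr [c Hc]]].
  exists r; split; [exact Hr |]; exists c.
  assert (HS : forall s, Rabs s < r ->
            is_pseries (fun n => Re (c n)) s (Re (f (x0 + s))) /\
            is_pseries (fun n => Im (c n)) s (Im (f (x0 + s)))).
  { intros s Hs.
    assert (H := Hc (x0 + s) ltac:(replace (x0 + s - x0) with s by ring; exact Hs)).
    replace (x0 + s - x0) with s in H by ring.
    apply is_series_C in H; destruct H as [H1 H2]; split; apply is_pseries_R;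
      [revert H1 | revert H2]; apply is_series_ext; intros n;
      [apply re_scal_r | apply im_scal_r]. }
  intros s Hs; split; [| split].
  - apply injective_projections; simpl; symmetry; apply is_pseries_unique, HS, Hs.
  - revert s Hs; apply CV_radius_gt_of_disk; intros s Hs; eexists; apply (HS s Hs).
  - revert s Hs; apply CV_radius_gt_of_disk; intros s Hs; eexists; apply (HS s Hs).
Qed.

Lemma real_analytic_ex_derive (f : R -> C) x : real_analytic f ->
  ex_derive (fun t => Re (f t)) x /\ ex_derive (fun t => Im (f t)) x.
Proof.
  intros Han; destruct (real_analytic_local_PSeriesC f x Han) as [r [Hr [c Hc]]].
  assert (Hnear : locally x (fun t => Rabs (t - x) < r)).
  { destruct (locally_Rabs_lt r 0 ltac:(rewrite Rabs_R0; lra)) as [e He].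
    exists e; intros t Ht; apply He.
    unfold ball in *; simpl in *; unfold AbsRing_ball, abs, minus, plus, opp in *; simpl in *.
    replace (t - x + - 0) with (t + - x) by ring; exact Ht. }
  assert (H0 : Rabs (x - x) < r) by (rewrite Rminus_diag, Rabs_R0; lra).
  split; [ apply (ex_derive_ext_loc (fun t => PSeries (fun n => Re (c n)) (t - x)))
         | apply (ex_derive_ext_loc (fun t => PSeries (fun n => Im (c n)) (t - x))) ];
    try (revert Hnear; apply filter_imp; intros t Ht;
         destruct (Hc _ Ht) as [E _]; rewrite Rplus_minus in E; now rewrite E);
    (apply (ex_derive_comp _ (fun t => t - x)); [apply ex_derive_PSeries, Hc, H0 | auto_derive; auto]).
Qed.

(* The complex equation w' = (p + i q - k / t) w in real form.  Its first integral
   |w|^2 |t|^(2k) e^(-2 p t) shows that a solution vanishing at one point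
   vanishes on the whole half-line containing it. *)
Lemma planar_linear_ode_zero (u v : R -> R) k p q a b :
  (forall t, t <> 0 -> ex_derive u t /\ ex_derive v t /\
     Derive u t = p * u t - q * v t - k * u t / t /\
     Derive v t = p * v t + q * u t - k * v t / t) ->
  0 < a * b -> u a = 0 -> v a = 0 -> u b = 0 /\ v b = 0.
Proof.
  intros Hd Hab Ha Hb.
  set (psi := fun t => (u t ^ 2 + v t ^ 2) * exp (k * ln (t * t) - 2 * p * t)).
  assert (Hpsi : forall t, t <> 0 -> is_derive psi t 0).
  { intros t Ht; destruct (Hd t Ht) as [Du [Dv [Eu Ev]]].
    assert (Htt : 0 < t * t) by nra.
    unfold psi; auto_derive; [repeat split; auto |].
    change (Derive (fun x => u x) t) with (Derive u t).
    change (Derive (fun x => v x) t) with (Derive v t).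
    rewrite Eu, Ev; field; auto. }
  assert (Hnz : forall t, Rmin a b <= t <= Rmax a b -> t <> 0).
  { intros t [H1 H2] ->; unfold Rmin, Rmax in *; destruct (Rle_dec a b); nra. }
  destruct (MVT_gen psi a b (fun _ => 0)) as [c [_ Hc]].
  - intros x Hx; apply Hpsi, Hnz; lra.
  - intros x Hx; apply continuity_pt_filterlim, (ex_derive_continuous psi).
    eexists; apply Hpsi, Hnz; auto.
  - assert (Hpb : psi b = 0) by (unfold psi in Hc |- *; rewrite Ha, Hb in Hc; lra).
    pose proof (exp_pos (k * ln (b * b) - 2 * p * b)).
    unfold psi in Hpb; apply Rmult_integral in Hpb; destruct Hpb; [nra | lra].
Qed.

Lemma solutions_eq_same_side (k : R) (mu : C) (f g : R -> C) a b :
  real_analytic f -> real_analytic g -> f 0 = g 0 ->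
  (forall x, T_kappa k f x = (mu * f x)%C) -> (forall x, T_kappa k g x = (mu * g x)%C) ->
  0 < a * b -> f a = g a -> f b = g b.
Proof.
  intros Hf Hg H0 Tf Tg Hab Ha.
  set (u := fun x => Re (f x) - Re (g x)); set (v := fun x => Im (f x) - Im (g x)).
  enough (u b = 0 /\ v b = 0) as [Hu Hv]
    by (unfold u, v, Re, Im in Hu, Hv; apply injective_projections; lra).
  apply (planar_linear_ode_zero u v k (Re mu) (Im mu) a b); auto;
    [| unfold u, v; rewrite Ha; ring ..].
  intros t Ht.
  destruct (real_analytic_ex_derive f t Hf) as [Dfr Dfi].
  destruct (real_analytic_ex_derive g t Hg) as [Dgr Dgi].
  pose proof (f_equal Re (Tf t)) as Rf; pose proof (f_equal Im (Tf t)) as If.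
  pose proof (f_equal Re (Tg t)) as Rg; pose proof (f_equal Im (Tg t)) as Ig.
  rewrite Re_T_kappa, re_mult, T_kappa_R_neq_0 in Rf, Rg by exact Ht.
  rewrite Im_T_kappa, im_mult, T_kappa_R_neq_0 in If, Ig by exact Ht.
  rewrite H0 in Rf, If.
  unfold u, v; split; [| split; [| split]].
  - now apply (ex_derive_minus (fun x => Re (f x)) (fun x => Re (g x))).
  - now apply (ex_derive_minus (fun x => Im (f x)) (fun x => Im (g x))).
  - rewrite (Derive_minus (fun x => Re (f x)) (fun x => Re (g x))) by assumption.
    (* Derive_minus produces binders of type R_AbsRing; identify them with those of Rf, Rg,
       which lra would otherwise see as different atoms. *)
    set (A := Derive (fun x : R => Re (f x)) t) in *.
    set (B := Derive (fun x : R => Re (g x)) t) in *.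
    change (Derive (fun x : R_AbsRing => Re (f x)) t) with A.
    change (Derive (fun x : R_AbsRing => Re (g x)) t) with B.
    unfold Rdiv in *; lra.
  - rewrite (Derive_minus (fun x => Im (f x)) (fun x => Im (g x))) by assumption.
    set (A := Derive (fun x : R => Im (f x)) t) in *.
    set (B := Derive (fun x : R => Im (g x)) t) in *.
    change (Derive (fun x : R_AbsRing => Im (f x)) t) with A.
    change (Derive (fun x : R_AbsRing => Im (g x)) t) with B.
    unfold Rdiv in *; lra.
Qed.

Lemma solutions_eq_of_eq_near_0 (k : R) (mu : C) (f g : R -> C) r :
  real_analytic f -> real_analytic g ->
  (forall x, T_kappa k f x = (mu * f x)%C) -> (forall x, T_kappa k g x = (mu * g x)%C) ->
  0 < r -> (forall t, Rabs t < r -> f t = g t) -> forall x, f x = g x.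
Proof.
  intros Hf Hg Tf Tg Hr Hnear x.
  destruct (Rlt_dec (Rabs x) r) as [Hx | Hx]; [now apply Hnear |].
  set (a := if Rlt_dec 0 x then r / 2 else - (r / 2)).
  assert (Ha : 0 < a * x /\ Rabs a < r).
  { unfold a; destruct (Rlt_dec 0 x).
    - rewrite Rabs_pos_eq by lra; split; nra.
    - assert (x < 0) by (destruct (Rtotal_order x 0) as [| [-> |]];
                         [| rewrite Rabs_R0 in Hx |]; lra).
      rewrite Rabs_Ropp, Rabs_pos_eq by lra; split; nra. }
  apply (solutions_eq_same_side k mu f g a x Hf Hg); auto; [| apply Ha | apply Hnear, Ha].
  apply Hnear; rewrite Rabs_R0; exact Hr.
Qed.

Lemma solution_coef_rec (k : R) (mu : C) (f : R -> C) (c : nat -> C) r :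
  0 < r -> (forall t, Rabs t < r -> f t = PSeriesC c t /\ in_CV_disk_C c t) ->
  (forall x, T_kappa k f x = (mu * f x)%C) ->
  forall n, dunkl_coef k c n = (mu * c n)%C.
Proof.
  intros Hr Hc Tf n.
  assert (Hr0 : Rabs 0 < r) by (rewrite Rabs_R0; exact Hr).
  apply (PSeriesC_ext_recip (dunkl_coef k c) (fun n => (mu * c n)%C));
    [apply in_CV_disk_C_dunkl, Hc, Hr0 | apply in_CV_disk_C_scal, Hc, Hr0 |].
  generalize (locally_Rabs_lt r 0 Hr0); apply filter_imp; intros t Ht.
  rewrite <- (T_kappa_PSeriesC k f c r t Hc Ht), Tf, PSeriesC_scal by apply (Hc t Ht).
  f_equal; apply (Hc t Ht).
Qed.

Lemma coef_eq_kummer_coef (k : R) (mu : C) (c : nat -> C) : -1 < k ->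
  c 0%nat = 1%C -> (forall n, dunkl_coef k c n = (mu * c n)%C) ->
  forall n, c n = kummer_coef (k + 1) mu n.
Proof.
  intros Hk H0 Hrec n; induction n as [| n IH]; [now rewrite kummer_coef_0 |].
  pose proof (Hrec n) as E; rewrite IH, <- dunkl_coef_kummer_coef in E by exact Hk.
  unfold dunkl_coef in E.
  assert (Hnz : RtoC (INR (S n) + k) <> 0%C)
    by (apply RtoC_neq_0; rewrite S_INR; pose proof (pos_INR n); lra).
  apply (f_equal (Cmult (/ RtoC (INR (S n) + k)))) in E.
  now rewrite !Cmult_assoc, Cinv_l, !Cmult_1_l in E.
Qed.

Lemma solution_eq_kummer_M1 (k : R) (mu : C) (f : R -> C) : -1 < k ->
  real_analytic f -> f 0 = 1%C -> (forall x, T_kappa k f x = (mu * f x)%C) ->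
  forall x, f x = kummer_M1 (k + 1) mu x.
Proof.
  intros Hk Hf H0 Tf.
  destruct (real_analytic_local_PSeriesC f 0 Hf) as [r [Hr [c Hc]]].
  assert (Hc0 : forall t, Rabs t < r -> f t = PSeriesC c t /\ in_CV_disk_C c t)
    by (intros t Ht; rewrite <- (Rplus_0_l t) at 1; apply Hc, Ht).
  assert (Hcoef : forall n, c n = kummer_coef (k + 1) mu n).
  { apply coef_eq_kummer_coef; [exact Hk | | exact (solution_coef_rec k mu f c r Hr Hc0 Tf)].
    rewrite <- PSeriesC_0, <- (proj1 (Hc0 0 ltac:(rewrite Rabs_R0; exact Hr))); exact H0. }
  apply (solutions_eq_of_eq_near_0 k mu f _ r Hf); auto.
  - apply real_analytic_kummer_M1; lra.
  - intros; apply T_kappa_kummer_M1, Hk.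
  - intros t Ht; rewrite (proj1 (Hc0 t Ht)); now apply PSeriesC_ext.
Qed.

Theorem theorem5p1 (kappa : R) (lambda : C) (hk : -1 < kappa) :
  (exists g : R -> C, forall x : R,
      is_series (kummer_term 1%C (RtoC (kappa + 1)) (Ci * lambda * RtoC x)%C) (g x)) /\
  (forall f : R -> C,
      (real_analytic f /\ f 0 = 1%C /\
       (forall x : R, T_kappa kappa f x = (Ci * lambda * f x)%C))
      <->
      (forall x : R,
         is_series (kummer_term 1%C (RtoC (kappa + 1)) (Ci * lambda * RtoC x)%C) (f x))).
Proof.
  assert (Hb : 0 < kappa + 1) by lra.
  set (M := kummer_M1 (kappa + 1) (Ci * lambda)).
  assert (HM : forall x, is_series (kummer_term 1 (RtoC (kappa + 1)) (Ci * lambda * RtoC x)) (M x))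
    by (intros; now apply is_series_kummer_M1).
  split; [now exists M |]; intros f; split.
  - intros (Hf & H0 & Tf) x.
    rewrite (solution_eq_kummer_M1 kappa (Ci * lambda) f hk Hf H0 Tf x); apply HM.
  - intros Hser.
    assert (Hfm : f = M).
    { apply functional_extensionality; intros x.
      exact (filterlim_locally_unique _ _ _ (Hser x) (HM x)). }
    rewrite Hfm; split; [| split].
    + now apply real_analytic_kummer_M1.
    + apply kummer_M1_0.
    + intros x; now apply T_kappa_kummer_M1.
Qed.
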